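(* Let $a<b$ and let $f:[a,b]\to\mathbb{R}$ be continuous. Define $$I_f(a,b)=\frac{1}{b-a}\int_a^b f(t)\,\mathrm{d}t,\quad B_f(a,b)=\frac{b-a}{2}\,I_f(a,b),\quad J_f(a,b)=b\,I_f(a,b)-\frac{1}{b-a}\int_a^b t\,f(t)\,\mathrm{d}t.$$ If $B_f(a,b)=J_f(a,b)$, then there exists $\eta\in(a,b)$ such that $f(\eta)=I_f(a,\eta)$, where $I_f(a,\eta)=\frac{1}{\eta-a}\int_a^\eta f(t)\,\mathrm{d}t$. *)

From Stdlib Require Import Reals.
From Coquelicot Require Import Coquelicot.
Open Scope R_scope.

Definition continuous_on_Icc (f : R -> R) (a b : R) : Prop :=
  forall x, a <= x <= b ->
    filterlim f (within (fun t => a <= t <= b) (locally x)) (locally (f x)).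

Definition I_f (f : R -> R) (a b : R) : R := / (b - a) * RInt f a b.

Definition B_f (f : R -> R) (a b : R) : R := (b - a) / 2 * I_f f a b.

Definition J_f (f : R -> R) (a b : R) : R :=
  b * I_f f a b - / (b - a) * RInt (fun t => t * f t) a b.

(* Extend f continuously to all of R by clamping its argument to [a, b], and
   consider k(y) = (y - a) F(y) - 2 int_a^y (y - t) f(t) dt with F(y) = int_a^y f.
   Then k(a) = 0, the hypothesis B_f(a,b) = J_f(a,b) says exactly k(b) = 0, and
   k'(y) = (y - a) f(y) - F(y); Rolle's theorem gives eta with k'(eta) = 0. *)
From Stdlib Require Import Reals Lra.
From Coquelicot Require Import Coquelicot.
Open Scope R_scope.

Definition clamp (a b x : R) : R := Rmax a (Rmin b x).

Lemma clamp_in (a b x : R) : a <= b -> a <= clamp a b x <= b.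
Proof. intros. unfold clamp, Rmax, Rmin. repeat destruct Rle_dec; lra. Qed.

Lemma clamp_id (a b x : R) : a <= x <= b -> clamp a b x = x.
Proof. intros. unfold clamp, Rmax, Rmin. repeat destruct Rle_dec; lra. Qed.

Lemma clamp_lipschitz (a b x y : R) : a <= b ->
  Rabs (clamp a b x - clamp a b y) <= Rabs (x - y).
Proof.
  intros. unfold clamp, Rmax, Rmin.
  repeat destruct Rle_dec; unfold Rabs; repeat destruct Rcase_abs; lra.
Qed.

Lemma continuous_clamp_ext (f : R -> R) (a b : R) :
  a <= b -> continuous_on_Icc f a b ->
  forall x, continuous (fun t => f (clamp a b t)) x.
Proof.
  intros Hab Hf x. apply filterlim_locally. intros eps.
  destruct (proj1 (filterlim_locally _ _)
              (Hf (clamp a b x) (clamp_in a b x Hab)) eps) as [d Hd].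
  exists d. intros y Hy. apply Hd; [| exact (clamp_in a b y Hab)].
  eapply Rle_lt_trans; [apply clamp_lipschitz; exact Hab | exact Hy].
Qed.

Lemma is_derive_RInt_continuous (g : R -> R) (a x : R) :
  (forall t, continuous g t) -> is_derive (fun y => RInt g a y) x (g x).
Proof.
  intros Hg. apply is_derive_RInt with (a := a); [| apply Hg].
  apply filter_forall. intros y. apply RInt_correct, ex_RInt_continuous.
  intros; apply Hg.
Qed.

Lemma Rolle_is_derive (k k' : R -> R) (a b : R) :
  a < b -> (forall x, is_derive k x (k' x)) -> k a = k b ->
  exists c, a < c < b /\ k' c = 0.
Proof.
  intros Hab Hk Hkab.
  destruct (MVT_cor2 k k' a b Hab) as [c [Hc Hac]].
  { intros x _. apply is_derive_Reals, Hk. }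
  exists c. split; [exact Hac |].
  apply (Rmult_eq_reg_r (b - a)); lra.
Qed.

Section MeanValueDefect.

Variables (g : R -> R) (a : R).
Hypothesis g_cont : forall t, continuous g t.

Let F y := RInt g a y.
Let T y := RInt (fun t => t * g t) a y.

Definition mean_defect (y : R) : R := F y * (y - a) - 2 * (y * F y - T y).

Lemma mean_defect_a : mean_defect a = 0.
Proof. unfold mean_defect, F, T. rewrite !RInt_point. unfold zero; simpl. ring. Qed.

Lemma mean_defect_b (b : R) : a < b -> B_f g a b = J_f g a b -> mean_defect b = 0.
Proof.
  intros Hab Hbal. unfold B_f, J_f, I_f in Hbal. unfold mean_defect, F, T.
  transitivity (2 * (b - a) * ((b - a) / 2 * (/ (b - a) * RInt g a b) -
    (b * (/ (b - a) * RInt g a b) - / (b - a) * RInt (fun t => t * g t) a b))).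
  - field. lra.
  - rewrite Hbal. ring.
Qed.

Lemma is_derive_mean_defect (x : R) :
  is_derive mean_defect x (g x * (x - a) - F x).
Proof.
  assert (dF : is_derive F x (g x)) by now apply is_derive_RInt_continuous.
  assert (dT : is_derive T x (x * g x)).
  { apply (is_derive_RInt_continuous (fun t => t * g t)). intros t.
    apply (continuous_mult (fun t => t) g); [apply continuous_id | apply g_cont]. }
  unfold mean_defect. auto_derive.
  - repeat split; eexists; eassumption.
  - replace (Derive (fun y => F y) x) with (g x)
      by (symmetry; apply is_derive_unique, dF).
    replace (Derive (fun y => T y) x) with (x * g x)
      by (symmetry; apply is_derive_unique, dT).
    ring.
Qed.

Lemma balanced_mean_value (b : R) :
  a < b -> B_f g a b = J_f g a b -> exists eta, a < eta < b /\ g eta = I_f g a eta.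
Proof.
  intros Hab Hbal.
  destruct (Rolle_is_derive mean_defect _ a b Hab is_derive_mean_defect)
    as [eta [Heta Hd]].
  { rewrite mean_defect_a, (mean_defect_b b Hab Hbal). reflexivity. }
  exists eta. split; [exact Heta |].
  unfold I_f. fold (F eta).
  apply (Rmult_eq_reg_l (eta - a)); [| lra].
  field_simplify; lra.
Qed.

End MeanValueDefect.

Section AgreeOnInterval.

Variables (f g : R -> R) (a b : R).
Hypothesis f_eq_g : forall x, Rmin a b < x < Rmax a b -> f x = g x.

Lemma I_f_ext : I_f f a b = I_f g a b.
Proof. unfold I_f. rewrite (RInt_ext f g); [reflexivity | exact f_eq_g]. Qed.

Lemma B_f_ext : B_f f a b = B_f g a b.
Proof. unfold B_f. rewrite I_f_ext. reflexivity. Qed.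

Lemma J_f_ext : J_f f a b = J_f g a b.
Proof.
  unfold J_f. rewrite I_f_ext, (RInt_ext (fun t => t * f t) (fun t => t * g t)).
  - reflexivity.
  - intros x Hx. rewrite f_eq_g by exact Hx. reflexivity.
Qed.

End AgreeOnInterval.

Theorem mainTheorem7 (f : R -> R) (a b : R) :
  a < b ->
  continuous_on_Icc f a b ->
  B_f f a b = J_f f a b ->
  exists eta, a < eta < b /\ f eta = I_f f a eta.
Proof.
  intros Hab Hf Hbal.
  set (g := fun t => f (clamp a b t)).
  assert (Hfg : forall u, a < u <= b -> forall x, Rmin a u < x < Rmax a u -> f x = g x).
  { intros u Hu x Hx. unfold g. rewrite Rmin_left, Rmax_right in Hx by lra.
    rewrite clamp_id by lra. reflexivity. }
  destruct (balanced_mean_value g a (continuous_clamp_ext f a b (Rlt_le _ _ Hab) Hf) b Hab)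
    as [eta [Heta Hmean]].
  { rewrite <- (B_f_ext f g a b), <- (J_f_ext f g a b) by (apply Hfg; lra). exact Hbal. }
  exists eta. split; [exact Heta |].
  rewrite (I_f_ext f g a eta) by (apply Hfg; lra).
  rewrite <- Hmean. unfold g. rewrite clamp_id by lra. reflexivity.
Qed.
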